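(* Let $Y$ be a Banach space and $K\subset Y$ a closed convex normal cone. Let $\alpha:\mathbb{R}_+\to\mathbb{R}_+$ be nondecreasing with $\lim_{t\to0^+}\alpha(t)/t=0$, and let $k_0\in K$. Let $\Phi:(0,\infty)\to Y$ satisfy: (i) $\Phi(t)\in K$ for all $t>0$; (ii) $\Phi(t)-\Phi(t_1)+\frac{\alpha(t_1)}{t_1}k_0\in K$ whenever $0<t_1<t$; (iii) $\Phi(t)$ converges weakly to $0$ as $t\to0^+$. Then $\|\Phi(t)\|\to0$ as $t\to0^+$.
   Context: A cone $K$ in a normed space $Y$ is normal if there is a constant $c>0$ such that $0\le_K x\le_K y$ implies $\|x\|\le c\|y\|$, where $x\le_K y$ means $y-x\in K$. *)

From Stdlib Require Import Reals Lra.
Open Scope R_scope.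

Record NormedSpace := {
  carrier :> Type;
  vzero : carrier;
  vadd : carrier -> carrier -> carrier;
  vopp : carrier -> carrier;
  vscal : R -> carrier -> carrier;
  vnorm : carrier -> R;
  vadd_assoc : forall x y z, vadd x (vadd y z) = vadd (vadd x y) z;
  vadd_comm : forall x y, vadd x y = vadd y x;
  vadd_0 : forall x, vadd x vzero = x;
  vadd_opp : forall x, vadd x (vopp x) = vzero;
  vscal_assoc : forall a b x, vscal a (vscal b x) = vscal (a * b) x;
  vscal_1 : forall x, vscal 1 x = x;
  vscal_distr_l : forall a x y, vscal a (vadd x y) = vadd (vscal a x) (vscal a y);
  vscal_distr_r : forall a b x, vscal (a + b) x = vadd (vscal a x) (vscal b x);
  vnorm_eq0 : forall x, vnorm x = 0 -> x = vzero;
  vnorm_scal : forall a x, vnorm (vscal a x) = Rabs a * vnorm x;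
  vnorm_triangle : forall x y, vnorm (vadd x y) <= vnorm x + vnorm y
}.

Arguments vzero {_}.
Arguments vadd {_} _ _.
Arguments vopp {_} _.
Arguments vscal {_} _ _.
Arguments vnorm {_} _.

Definition vsub {Y : NormedSpace} (x y : Y) : Y := vadd x (vopp y).

Definition is_Banach (Y : NormedSpace) : Prop :=
  forall u : nat -> Y,
    (forall eps, eps > 0 -> exists N, forall m n, (m >= N)%nat -> (n >= N)%nat ->
        vnorm (vsub (u m) (u n)) < eps) ->
    exists l : Y, forall eps, eps > 0 -> exists N, forall n, (n >= N)%nat ->
        vnorm (vsub (u n) l) < eps.

Definition cone_le {Y : NormedSpace} (K : Y -> Prop) (x y : Y) : Prop := K (vsub y x).

Definition is_cone {Y : NormedSpace} (K : Y -> Prop) : Prop :=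
  K vzero /\ forall a x, 0 <= a -> K x -> K (vscal a x).

Definition is_convex {Y : NormedSpace} (K : Y -> Prop) : Prop :=
  forall x y t, K x -> K y -> 0 <= t <= 1 ->
    K (vadd (vscal t x) (vscal (1 - t) y)).

(* Closed in the norm topology (sequentially closed, equivalent in metric spaces). *)
Definition is_closed {Y : NormedSpace} (K : Y -> Prop) : Prop :=
  forall (u : nat -> Y) (l : Y), (forall n, K (u n)) ->
    (forall eps, eps > 0 -> exists N, forall n, (n >= N)%nat -> vnorm (vsub (u n) l) < eps) ->
    K l.

Definition is_normal {Y : NormedSpace} (K : Y -> Prop) : Prop :=
  exists c, c > 0 /\ forall x y, cone_le K vzero x -> cone_le K x y ->
    vnorm x <= c * vnorm y.

Definition is_cont_linear_functional {Y : NormedSpace} (f : Y -> R) : Prop :=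
  (forall x y, f (vadd x y) = f x + f y) /\
  (forall a x, f (vscal a x) = a * f x) /\
  (exists M, forall x, Rabs (f x) <= M * vnorm x).

Definition lim_0plus (g : R -> R) (l : R) : Prop :=
  forall eps, eps > 0 -> exists delta, delta > 0 /\
    forall t, 0 < t < delta -> Rabs (g t - l) < eps.

Definition weak_lim_0plus_zero {Y : NormedSpace} (Phi : R -> Y) : Prop :=
  forall f : Y -> R, is_cont_linear_functional f -> lim_0plus (fun t => f (Phi t)) 0.

(* Fix eps > 0 and let D be the convex set of vectors y that eventually dominate
   Phi up to the error term, i.e. y - Phi(u) + (alpha(u)/u) k0 is in K for all
   small u.  By (ii), D contains every Phi(t).  Since Phi(t) tends weakly to 0,
   D meets every ball around 0: otherwise Hahn-Banach separates D from a ball by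
   a norm-one functional, which stays bounded away from 0 along Phi.  For a small
   y in D, normality of K bounds ||Phi(u)|| by a multiple of ||y + (alpha(u)/u) k0||,
   which is small for small u. *)

From Stdlib Require Import Reals Lra Classical ClassicalEpsilon.
From mathcomp Require classical_sets.
Open Scope R_scope.

Section VectorAlgebra.
Variable Y : NormedSpace.
Implicit Types x y z w : Y.

Lemma vadd_0l x : vadd vzero x = x.
Proof. rewrite vadd_comm; apply vadd_0. Qed.

Lemma vopp_l x : vadd (vopp x) x = vzero.
Proof. rewrite vadd_comm; apply vadd_opp. Qed.

Lemma vadd_cancel_l x y z : vadd x y = vadd x z -> y = z.
Proof.
intros H.
rewrite <- (vadd_0l y), <- (vadd_0l z), <- (vopp_l x), <- !vadd_assoc, H.
reflexivity.
Qed.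

Lemma vscal_0 x : vscal 0 x = vzero.
Proof.
apply (vadd_cancel_l (vscal 0 x)).
rewrite vadd_0, <- vscal_distr_r, Rplus_0_r; reflexivity.
Qed.

Lemma vscal_0r a : vscal a (@vzero Y) = vzero.
Proof. rewrite <- (vscal_0 vzero), vscal_assoc, Rmult_0_r; reflexivity. Qed.

Lemma vopp_scal x : vopp x = vscal (-1) x.
Proof.
apply (vadd_cancel_l x).
rewrite vadd_opp. pattern x at 1; rewrite <- (vscal_1 _ x).
rewrite <- vscal_distr_r, Rplus_opp_r, vscal_0; reflexivity.
Qed.

Lemma vopp_vscal a x : vopp (vscal a x) = vscal (- a) x.
Proof. rewrite vopp_scal, vscal_assoc; f_equal; ring. Qed.

Lemma vsub_scal a b x : vsub (vscal a x) (vscal b x) = vscal (a - b) x.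
Proof.
unfold vsub. rewrite vopp_vscal, <- vscal_distr_r; reflexivity.
Qed.

Lemma vsub_0r x : vsub x vzero = x.
Proof. unfold vsub. rewrite vopp_scal, vscal_0r, vadd_0; reflexivity. Qed.

Lemma vsub_eq0 x y : vsub x y = vzero -> x = y.
Proof.
unfold vsub; intros H.
rewrite <- (vadd_0 _ x), <- (vopp_l y), vadd_assoc, H, vadd_0l; reflexivity.
Qed.

Lemma vadd_ACA x y z w : vadd (vadd x y) (vadd z w) = vadd (vadd x z) (vadd y w).
Proof.
rewrite <- !vadd_assoc; f_equal. rewrite !vadd_assoc; f_equal. apply vadd_comm.
Qed.

Lemma vsub_add_eq x u y v : vadd x u = vadd y v -> vsub y x = vsub u v.
Proof.
unfold vsub; intros H.
rewrite <- (vadd_0 _ (vadd y (vopp x))), <- (vadd_opp _ v), vadd_ACA, <- H,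
  vadd_ACA, vadd_opp, vadd_0l; reflexivity.
Qed.

Lemma vopp_add x y : vopp (vadd x y) = vadd (vopp x) (vopp y).
Proof. rewrite !vopp_scal; apply vscal_distr_l. Qed.

Lemma vscal_rescale t x y : t <> 0 -> vscal t (vadd (vscal (/ t) x) y) = vadd x (vscal t y).
Proof.
intros t0. rewrite vscal_distr_l, vscal_assoc, Rinv_r, vscal_1 by exact t0; reflexivity.
Qed.

Lemma vadd_oppKl x y : vadd (vadd x y) (vopp x) = y.
Proof. rewrite (vadd_comm _ x y), <- vadd_assoc, vadd_opp, vadd_0; reflexivity. Qed.

Lemma vadd_convex l x y w :
  vadd (vscal l (vadd x w)) (vscal (1 - l) (vadd y w)) =
  vadd (vadd (vscal l x) (vscal (1 - l) y)) w.
Proof.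
rewrite !vscal_distr_l, vadd_ACA, <- (vscal_distr_r _ l).
replace (l + (1 - l)) with 1 by ring. rewrite vscal_1; reflexivity.
Qed.

Lemma vnorm_0 : vnorm (@vzero Y) = 0.
Proof. rewrite <- (vscal_0 vzero), vnorm_scal, Rabs_R0; ring. Qed.

Lemma vnorm_opp x : vnorm (vopp x) = vnorm x.
Proof. rewrite vopp_scal, vnorm_scal, Rabs_left by lra; ring. Qed.

Lemma vnorm_ge0 x : 0 <= vnorm x.
Proof.
pose proof (vnorm_triangle _ x (vopp x)) as H.
rewrite vadd_opp, vnorm_0, vnorm_opp in H; lra.
Qed.

End VectorAlgebra.

Section HahnBanach.
Variable Y : NormedSpace.
Variable p : Y -> R.
Hypothesis p_subadditive : forall x y, p (vadd x y) <= p x + p y.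
Hypothesis p_homogeneous : forall t x, 0 < t -> t * p x <= p (vscal t x).

(* Partial linear functionals dominated by p are handled through their graphs,
   so that Zorn's lemma for families of sets applies directly. *)
Record dominated_linear_graph (G : Y * R -> Prop) : Prop := {
  graph_functional : forall x a b, G (x, a) -> G (x, b) -> a = b;
  graph_add : forall x a y b, G (x, a) -> G (y, b) -> G (vadd x y, a + b);
  graph_scal : forall t x a, G (x, a) -> G (vscal t x, t * a);
  graph_dominated : forall x a, G (x, a) -> a <= p x }.

Lemma graph_sub G x a y b : dominated_linear_graph G ->
  G (x, a) -> G (y, b) -> G (vsub x y, a - b).
Proof.
intros HG Gx Gy. unfold vsub. rewrite vopp_scal.
replace (a - b) with (a + -1 * b) by ring.
apply (graph_add _ HG); [exact Gx | apply (graph_scal _ HG); exact Gy].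
Qed.

Lemma graph_0 G x a : dominated_linear_graph G -> G (x, a) -> G (vzero, 0).
Proof.
intros HG Gx. pose proof (graph_scal _ HG 0 x a Gx) as H.
rewrite vscal_0, Rmult_0_l in H; exact H.
Qed.

Lemma dominated_linear_graph_0 : dominated_linear_graph (fun z => z = (vzero, 0)).
Proof.
split.
- intros x a b Ea Eb. injection Ea as _ ->. injection Eb as _ ->. reflexivity.
- intros x a y b Ex Ey. injection Ex as -> ->. injection Ey as -> ->.
  rewrite vadd_0, Rplus_0_r; reflexivity.
- intros t x a Ex. injection Ex as -> ->. rewrite vscal_0r, Rmult_0_r; reflexivity.
- intros x a Ex. injection Ex as -> ->.
  pose proof (p_subadditive vzero vzero) as H. rewrite vadd_0 in H; lra.
Qed.

Lemma dominated_linear_graph_union (F : (Y * R -> Prop) -> Prop) :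
  (forall G, F G -> dominated_linear_graph G) ->
  (forall G H, F G -> F H -> (forall z, G z -> H z) \/ (forall z, H z -> G z)) ->
  dominated_linear_graph (fun z => exists2 G, F G & G z).
Proof.
intros HF Htot.
assert (common : forall G H z w, F G -> F H -> G z -> H w -> exists2 M, F M & M z /\ M w).
{ intros G H z w FG FH Gz Hw.
  destruct (Htot G H FG FH) as [GH | HG]; [exists H | exists G]; auto. }
split.
- intros x a b [G FG Ga] [H FH Hb].
  destruct (common _ _ _ _ FG FH Ga Hb) as [M FM [Ma Mb]].
  exact (graph_functional _ (HF M FM) x a b Ma Mb).
- intros x a y b [G FG Ga] [H FH Hb].
  destruct (common _ _ _ _ FG FH Ga Hb) as [M FM [Ma Mb]].
  exists M; [exact FM | exact (graph_add _ (HF M FM) x a y b Ma Mb)].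
- intros t x a [G FG Ga]. exists G; [exact FG | exact (graph_scal _ (HF G FG) t x a Ga)].
- intros x a [G FG Ga]. exact (graph_dominated _ (HF G FG) x a Ga).
Qed.

Section OneStepExtension.
Variables (A : Y * R -> Prop) (x0 : Y).
Hypothesis A_graph : dominated_linear_graph A.
Hypothesis A_0 : A (vzero, 0).
Hypothesis x0_notin : forall a, ~ A (x0, a).

Lemma extension_value_exists : exists c,
  (forall y b, A (y, b) -> - p (vopp (vadd y x0)) - b <= c) /\
  (forall y b, A (y, b) -> c <= p (vadd y x0) - b).
Proof.
assert (bounds : forall y b y' b', A (y, b) -> A (y', b') ->
          - p (vopp (vadd y x0)) - b <= p (vadd y' x0) - b').
{ intros y b y' b' Ay Ay'.
  pose proof (graph_dominated _ A_graph _ _ (graph_sub _ _ _ _ _ A_graph Ay' Ay)) as H.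
  assert (E : vsub y' y = vadd (vadd y' x0) (vopp (vadd y x0))).
  { unfold vsub. rewrite vopp_add, vadd_ACA, vadd_opp, vadd_0; reflexivity. }
  rewrite E in H. pose proof (p_subadditive (vadd y' x0) (vopp (vadd y x0))). lra. }
set (E := fun r => exists y b, A (y, b) /\ r = - p (vopp (vadd y x0)) - b).
destruct (completeness E) as [c [c_ub c_least]].
- exists (p (vadd vzero x0) - 0). intros r [y [b [Ay ->]]]. exact (bounds _ _ _ _ Ay A_0).
- exists (- p (vopp (vadd vzero x0)) - 0). exists vzero, 0. split; [exact A_0 | reflexivity].
- exists c. split.
  + intros y b Ay. apply c_ub. exists y, b. split; [exact Ay | reflexivity].
  + intros y' b' Ay'. apply c_least. intros r [y [b [Ay ->]]]. exact (bounds _ _ _ _ Ay Ay').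
Qed.

Variable c : R.
Hypothesis c_lower : forall y b, A (y, b) -> - p (vopp (vadd y x0)) - b <= c.
Hypothesis c_upper : forall y b, A (y, b) -> c <= p (vadd y x0) - b.

Definition graph_extension : Y * R -> Prop :=
  fun z => exists x a t, A (x, a) /\ z = (vadd x (vscal t x0), a + t * c).

Lemma graph_extension_functional x a t y b s : A (x, a) -> A (y, b) ->
  vadd x (vscal t x0) = vadd y (vscal s x0) -> a + t * c = b + s * c.
Proof.
intros Ax Ay E.
pose proof (vsub_add_eq _ _ _ _ _ E) as E'. rewrite vsub_scal in E'.
destruct (Req_dec t s) as [<- | ts].
- rewrite Rminus_diag, vscal_0 in E'. apply vsub_eq0 in E'. subst y.
  rewrite (graph_functional _ A_graph x a b Ax Ay); reflexivity.
- exfalso. apply (x0_notin (/ (t - s) * (b - a))).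
  replace x0 with (vscal (/ (t - s)) (vsub y x)).
  + apply (graph_scal _ A_graph). exact (graph_sub _ _ _ _ _ A_graph Ay Ax).
  + rewrite E', vscal_assoc, Rinv_l by lra. apply vscal_1.
Qed.

Lemma graph_extension_dominated x a t : A (x, a) -> a + t * c <= p (vadd x (vscal t x0)).
Proof.
intros Ax.
destruct (Rtotal_order t 0) as [t_neg | [-> | t_pos]].
- pose proof (c_lower _ _ (graph_scal _ A_graph (/ t) x a Ax)) as hc.
  set (w := vadd (vscal (/ t) x) x0) in hc.
  pose proof (p_homogeneous (- t) (vopp w) ltac:(lra)) as hp.
  replace (vscal (- t) (vopp w)) with (vadd x (vscal t x0)) in hp.
  2: { unfold w. rewrite vopp_scal, vscal_assoc, <- vscal_rescale by lra. f_equal; ring. }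
  assert (t * c <= - t * p (vopp w) - a).
  { replace (- t * p (vopp w) - a) with (t * (- p (vopp w) - / t * a)) by (field; lra).
    apply Rmult_le_compat_neg_l; lra. }
  lra.
- rewrite vscal_0, vadd_0, Rmult_0_l, Rplus_0_r. exact (graph_dominated _ A_graph x a Ax).
- pose proof (c_upper _ _ (graph_scal _ A_graph (/ t) x a Ax)) as hc.
  pose proof (p_homogeneous t (vadd (vscal (/ t) x) x0) t_pos) as hp.
  rewrite vscal_rescale in hp by lra.
  assert (t * c <= t * p (vadd (vscal (/ t) x) x0) - a).
  { replace (t * p (vadd (vscal (/ t) x) x0) - a)
      with (t * (p (vadd (vscal (/ t) x) x0) - / t * a)) by (field; lra).
    apply Rmult_le_compat_l; lra. }
  lra.
Qed.

Lemma graph_extension_linear : dominated_linear_graph graph_extension.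
Proof.
split.
- intros w a' b' [x [a [t [Ax E1]]]] [y [b [s [Ay E2]]]].
  injection E1 as -> ->. injection E2 as E ->.
  exact (graph_extension_functional _ _ _ _ _ _ Ax Ay E).
- intros w a' w' b' [x [a [t [Ax E1]]]] [y [b [s [Ay E2]]]].
  injection E1 as -> ->. injection E2 as -> ->.
  exists (vadd x y), (a + b), (t + s). split; [exact (graph_add _ A_graph _ _ _ _ Ax Ay) |].
  rewrite vadd_ACA, <- vscal_distr_r. f_equal; ring.
- intros r w a' [x [a [t [Ax E1]]]]. injection E1 as -> ->.
  exists (vscal r x), (r * a), (r * t). split; [exact (graph_scal _ A_graph r x a Ax) |].
  rewrite vscal_distr_l, vscal_assoc. f_equal; ring.
- intros w a' [x [a [t [Ax E1]]]]. injection E1 as -> ->.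
  exact (graph_extension_dominated x a t Ax).
Qed.

End OneStepExtension.

Theorem hahn_banach : exists f : Y -> R,
  (forall x y, f (vadd x y) = f x + f y) /\ (forall a x, f (vscal a x) = a * f x) /\
  (forall x, f x <= p x).
Proof.
destruct (@classical_sets.Zorn_bigcup (Y * R) dominated_linear_graph) as [A [A_graph A_max]].
{ intros F HF Htot. exact (dominated_linear_graph_union F HF Htot). }
assert (A_maximal : forall B, (forall z, A z -> B z) -> dominated_linear_graph B ->
                      forall z, B z -> A z).
{ intros B AB HB. apply NNPP. intros nBA. exact (A_max B (conj AB nBA) HB). }
assert (A_0 : A (vzero, 0)).
{ destruct (classic (exists z, A z)) as [[[x a] Ax] | A_empty].
  - exact (graph_0 _ _ _ A_graph Ax).
  - apply (A_maximal _ (fun z Az => False_ind _ (A_empty (ex_intro _ z Az)))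
             dominated_linear_graph_0); reflexivity. }
assert (A_total : forall x0, exists a, A (x0, a)).
{ intros x0. apply NNPP. intros x0_notin.
  assert (x0_notin' : forall a, ~ A (x0, a))
    by (intros a Ax0; exact (x0_notin (ex_intro _ a Ax0))).
  destruct (extension_value_exists A x0 A_graph A_0) as [c [c_lower c_upper]].
  apply (x0_notin' c), (A_maximal (graph_extension A x0 c)).
  - intros [x a] Ax. exists x, a, 0. split; [exact Ax |].
    rewrite vscal_0, vadd_0, Rmult_0_l, Rplus_0_r; reflexivity.
  - exact (graph_extension_linear A x0 A_graph x0_notin' c c_lower c_upper).
  - exists vzero, 0, 1. split; [exact A_0 |]. rewrite vadd_0l, vscal_1. f_equal; ring. }
set (f := fun x => proj1_sig (constructive_indefinite_description _ (A_total x))).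
assert (A_f : forall x, A (x, f x))
  by (intros x; exact (proj2_sig (constructive_indefinite_description _ (A_total x)))).
exists f. split; [| split].
- intros x y. apply (graph_functional _ A_graph (vadd x y)); [apply A_f |].
  exact (graph_add _ A_graph _ _ _ _ (A_f x) (A_f y)).
- intros a x. apply (graph_functional _ A_graph (vscal a x)); [apply A_f |].
  exact (graph_scal _ A_graph a _ _ (A_f x)).
- intros x. exact (graph_dominated _ A_graph _ _ (A_f x)).
Qed.

End HahnBanach.

Section Separation.
Variable Y : NormedSpace.
Variables (D : Y -> Prop) (d : R) (y0 : Y).
Hypothesis D_convex : is_convex D.
Hypothesis D_y0 : D y0.
Hypothesis D_far : forall y, D y -> d <= vnorm y.

(* separation_sup x = - inf_(l >= 0, y in D) (||x + l y|| - l d).  Its negation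
   is sublinear, bounded by ||x||, and at most -d at -y for y in D, so a linear
   functional below it separates D from the open ball of radius d. *)
Definition separation_set (x : Y) (r : R) : Prop :=
  exists l y, 0 <= l /\ D y /\ r = l * d - vnorm (vadd x (vscal l y)).

Lemma separation_set_le_norm x r : separation_set x r -> r <= vnorm x.
Proof.
intros [l [y [l_ge0 [Dy ->]]]].
pose proof (vnorm_triangle _ (vadd x (vscal l y)) (vopp x)) as H.
rewrite vadd_oppKl, vnorm_opp, vnorm_scal, Rabs_pos_eq in H by exact l_ge0.
pose proof (D_far y Dy). nra.
Qed.

Lemma separation_set_opp_norm x : separation_set x (- vnorm x).
Proof. exists 0, y0. rewrite vscal_0, vadd_0. repeat split; auto; lra. Qed.

Definition separation_sup (x : Y) : R :=
  proj1_sig (completeness (separation_set x)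
    (ex_intro _ (vnorm x) (separation_set_le_norm x))
    (ex_intro _ _ (separation_set_opp_norm x))).

Lemma separation_sup_ub x r : separation_set x r -> r <= separation_sup x.
Proof. apply (proj2_sig (completeness _ _ _)). Qed.

Lemma separation_sup_least x b : (forall r, separation_set x r -> r <= b) ->
  separation_sup x <= b.
Proof. apply (proj2_sig (completeness _ _ _)). Qed.

Lemma separation_set_add x z r1 r2 : separation_set x r1 -> separation_set z r2 ->
  exists2 r, separation_set (vadd x z) r & r1 + r2 <= r.
Proof.
intros [l1 [y1 [l1_ge0 [Dy1 ->]]]] [l2 [y2 [l2_ge0 [Dy2 ->]]]].
destruct (Req_dec (l1 + l2) 0) as [L0 | L0].
- assert (l1 = 0) as -> by lra. assert (l2 = 0) as -> by lra.
  exists (- vnorm (vadd x z)); [apply separation_set_opp_norm |].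
  rewrite !vscal_0, !vadd_0. pose proof (vnorm_triangle _ x z). lra.
- set (L := l1 + l2).
  set (y := vadd (vscal (l1 / L) y1) (vscal (1 - l1 / L) y2)).
  assert (Ly : vscal L y = vadd (vscal l1 y1) (vscal l2 y2)).
  { unfold y. rewrite vscal_distr_l, !vscal_assoc. f_equal; f_equal; unfold L; field; lra. }
  exists (L * d - vnorm (vadd (vadd x z) (vscal L y))).
  + exists L, y. split; [unfold L; lra | split; [| reflexivity]].
    apply D_convex; [exact Dy1 | exact Dy2 |].
    split; [apply Rmult_le_pos; [lra | left; apply Rinv_0_lt_compat; unfold L; lra] |].
    apply Rmult_le_reg_r with L; [unfold L; lra |].
    unfold Rdiv. rewrite Rmult_assoc, Rinv_l by exact L0. unfold L; lra.
  + rewrite Ly, vadd_ACA.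
    pose proof (vnorm_triangle _ (vadd x (vscal l1 y1)) (vadd z (vscal l2 y2))).
    unfold L; lra.
Qed.

Lemma separation_sup_superadditive x z :
  separation_sup x + separation_sup z <= separation_sup (vadd x z).
Proof.
assert (H : forall r2, separation_set z r2 ->
          separation_sup x <= separation_sup (vadd x z) - r2).
{ intros r2 Ez. apply separation_sup_least. intros r1 Ex.
  destruct (separation_set_add x z r1 r2 Ex Ez) as [r Exz le_r].
  pose proof (separation_sup_ub _ _ Exz). lra. }
assert (separation_sup z <= separation_sup (vadd x z) - separation_sup x).
{ apply separation_sup_least. intros r2 Ez. pose proof (H r2 Ez). lra. }
lra.
Qed.

Lemma separation_sup_scal t x : 0 < t -> separation_sup (vscal t x) <= t * separation_sup x.
Proof.
intros t_pos. apply separation_sup_least. intros r [l [y [l_ge0 [Dy ->]]]].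
assert (E : separation_set x (l / t * d - vnorm (vadd x (vscal (l / t) y)))).
{ exists (l / t), y. repeat split; [| exact Dy].
  apply Rmult_le_pos; [lra | left; apply Rinv_0_lt_compat; lra]. }
pose proof (Rmult_le_compat_l t _ _ (Rlt_le _ _ t_pos) (separation_sup_ub x _ E)) as H.
replace (vadd (vscal t x) (vscal l y)) with (vscal t (vadd x (vscal (l / t) y))).
- rewrite vnorm_scal, Rabs_pos_eq by lra.
  replace (l * d) with (t * (l / t * d)) by (field; lra). lra.
- rewrite vscal_distr_l, vscal_assoc. do 2 f_equal. field; lra.
Qed.

Theorem separation_from_ball : exists f : Y -> R,
  (forall x y, f (vadd x y) = f x + f y) /\ (forall a x, f (vscal a x) = a * f x) /\
  (forall x, f x <= vnorm x) /\ (forall y, D y -> d <= f y).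
Proof.
destruct (hahn_banach Y (fun x => - separation_sup x)) as [f [f_add [f_scal f_le]]].
- intros x z. pose proof (separation_sup_superadditive x z). lra.
- intros t x t_pos. pose proof (separation_sup_scal t x t_pos). lra.
- exists f. repeat split; [exact f_add | exact f_scal | |].
  + intros x. pose proof (f_le x). pose proof (separation_sup_ub _ _ (separation_set_opp_norm x)).
    lra.
  + intros y Dy.
    assert (E : separation_set (vopp y) d).
    { exists 1, y. rewrite vscal_1, vopp_l, vnorm_0. repeat split; auto; lra. }
    pose proof (separation_sup_ub _ _ E). pose proof (f_le (vopp y)).
    rewrite vopp_scal, f_scal in *. lra.
Qed.

End Separation.

Lemma cont_linear_functional_of_le_norm (Y : NormedSpace) (f : Y -> R) :
  (forall x y, f (vadd x y) = f x + f y) -> (forall a x, f (vscal a x) = a * f x) ->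
  (forall x, f x <= vnorm x) -> is_cont_linear_functional f.
Proof.
intros f_add f_scal f_le. split; [exact f_add | split; [exact f_scal |]].
exists 1. intros x. apply Rabs_le.
pose proof (f_le x). pose proof (f_le (vopp x)) as f_opp.
rewrite vnorm_opp, vopp_scal, f_scal in f_opp. lra.
Qed.

Theorem weakly_null_convex_meets_balls (Y : NormedSpace) (D : Y -> Prop) (Phi : R -> Y) :
  is_convex D -> (forall t, 0 < t -> D (Phi t)) -> weak_lim_0plus_zero Phi ->
  forall d, d > 0 -> exists y, D y /\ vnorm y < d.
Proof.
intros D_convex D_Phi Phi_weak d d_pos. apply NNPP. intros no_small.
assert (D_far : forall y, D y -> d <= vnorm y).
{ intros y Dy. apply Rnot_lt_le. intros small. exact (no_small (ex_intro _ y (conj Dy small))). }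
destruct (separation_from_ball Y D d (Phi 1) D_convex (D_Phi 1 Rlt_0_1) D_far)
  as [f [f_add [f_scal [f_le f_D]]]].
destruct (Phi_weak f (cont_linear_functional_of_le_norm Y f f_add f_scal f_le) d d_pos)
  as [delta [delta_pos f_Phi_small]].
pose proof (f_Phi_small (delta / 2) ltac:(lra)) as H.
pose proof (f_D _ (D_Phi (delta / 2) ltac:(lra))).
rewrite Rminus_0_r in H. apply Rabs_def2 in H. lra.
Qed.

Section EventualUpperBound.
Variables (Y : NormedSpace) (K : Y -> Prop) (Phi : R -> Y) (c : R -> R) (k0 : Y).

Definition eventual_upper_bound (y : Y) : Prop :=
  exists s, 0 < s /\ forall u, 0 < u < s -> K (vadd (vsub y (Phi u)) (vscal (c u) k0)).

Lemma eventual_upper_bound_convex : is_convex K -> is_convex eventual_upper_bound.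
Proof.
intros K_convex y1 y2 l [s1 [s1_pos H1]] [s2 [s2_pos H2]] hl.
exists (Rmin s1 s2). split; [apply Rmin_pos; lra |].
intros u [u_pos u_lt].
assert (shift : forall y, vadd (vsub y (Phi u)) (vscal (c u) k0) =
                          vadd y (vadd (vopp (Phi u)) (vscal (c u) k0))).
{ intros y. unfold vsub. rewrite vadd_assoc; reflexivity. }
rewrite shift, <- vadd_convex, <- !shift.
apply K_convex; [apply H1 | apply H2 | exact hl];
  split; [exact u_pos | | exact u_pos |];
  eapply Rlt_le_trans; eauto using Rmin_l, Rmin_r.
Qed.

Variable cN : R.
Hypothesis cN_pos : 0 < cN.
Hypothesis K_normal :
  forall x z, cone_le K vzero x -> cone_le K x z -> vnorm x <= cN * vnorm z.
Hypothesis K_Phi : forall t, 0 < t -> K (Phi t).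
Hypothesis c_ge0 : forall u, 0 < u -> 0 <= c u.

Lemma eventual_upper_bound_norm y : eventual_upper_bound y ->
  exists s, 0 < s /\ forall u, 0 < u < s -> vnorm (Phi u) <= cN * (vnorm y + c u * vnorm k0).
Proof.
intros [s [s_pos H]].
exists s. split; [exact s_pos |]. intros u hu.
apply Rle_trans with (cN * vnorm (vadd y (vscal (c u) k0))).
- apply K_normal; unfold cone_le.
  + rewrite vsub_0r. apply K_Phi; lra.
  + unfold vsub. rewrite <- vadd_assoc, (vadd_comm _ (vscal (c u) k0)), vadd_assoc.
    apply H; exact hu.
- apply Rmult_le_compat_l; [lra |].
  pose proof (vnorm_triangle _ y (vscal (c u) k0)) as T.
  rewrite vnorm_scal, Rabs_pos_eq in T by (apply c_ge0; lra). exact T.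
Qed.

Lemma lim_norm_of_small_upper_bounds :
  lim_0plus c 0 -> (forall d, d > 0 -> exists y, eventual_upper_bound y /\ vnorm y < d) ->
  lim_0plus (fun t => vnorm (Phi t)) 0.
Proof.
intros c_lim small_bounds eps eps_pos.
pose proof (vnorm_ge0 _ k0) as k0_ge0.
set (d := eps / (2 * cN)).
set (m := eps / (2 * cN * (1 + vnorm k0))).
assert (cN * d = eps / 2) by (unfold d; field; lra).
assert (cN * m * (1 + vnorm k0) = eps / 2) by (unfold m; field; lra).
destruct (small_bounds d ltac:(unfold d; apply Rdiv_lt_0_compat; lra)) as [y [y_bound y_small]].
destruct (eventual_upper_bound_norm y y_bound) as [s [s_pos Phi_le]].
destruct (c_lim m ltac:(unfold m; apply Rdiv_lt_0_compat; nra)) as [s' [s'_pos c_small]].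
exists (Rmin s s'). split; [apply Rmin_pos; lra |]. intros u [u_pos u_lt].
pose proof (Phi_le u (conj u_pos (Rlt_le_trans _ _ _ u_lt (Rmin_l s s')))).
pose proof (c_small u (conj u_pos (Rlt_le_trans _ _ _ u_lt (Rmin_r s s')))) as c_u.
pose proof (c_ge0 u u_pos).
rewrite Rminus_0_r, Rabs_pos_eq in c_u by lra.
rewrite Rminus_0_r, Rabs_pos_eq by apply vnorm_ge0.
assert (cN * vnorm y < eps / 2) by (apply Rmult_lt_compat_l with (r := cN) in y_small; lra).
assert (cN * (c u * vnorm k0) <= eps / 2).
{ apply Rle_trans with (cN * (m * (1 + vnorm k0))); [| lra].
  apply Rmult_le_compat_l; [lra |]. nra. }
lra.
Qed.

End EventualUpperBound.

Theorem lemma4p1 (Y : NormedSpace) (K : Y -> Prop) (alpha : R -> R) (k0 : Y)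
  (Phi : R -> Y)
  (HY : is_Banach Y)
  (HKcone : is_cone K) (HKconv : is_convex K) (HKclosed : is_closed K)
  (HKnormal : is_normal K)
  (Halpha_nonneg : forall t, 0 <= t -> 0 <= alpha t)
  (Halpha_mono : forall s t, 0 <= s -> s <= t -> alpha s <= alpha t)
  (Halpha_lim : lim_0plus (fun t => alpha t / t) 0)
  (Hk0 : K k0)
  (H1 : forall t, 0 < t -> K (Phi t))
  (H2 : forall t1 t, 0 < t1 -> t1 < t ->
          K (vadd (vsub (Phi t) (Phi t1)) (vscal (alpha t1 / t1) k0)))
  (H3 : weak_lim_0plus_zero Phi) :
  lim_0plus (fun t => vnorm (Phi t)) 0.
Proof.
destruct HKnormal as [cN [cN_pos K_normal]].
set (c := fun t => alpha t / t).
assert (c_ge0 : forall u, 0 < u -> 0 <= c u).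
{ intros u u_pos. apply Rmult_le_pos; [apply Halpha_nonneg; lra |].
  left; apply Rinv_0_lt_compat, u_pos. }
assert (Phi_bounds : forall t, 0 < t -> eventual_upper_bound Y K Phi c k0 (Phi t)).
{ intros t t_pos. exists t. split; [exact t_pos |].
  intros u [u_pos u_lt]. exact (H2 u t u_pos u_lt). }
apply (lim_norm_of_small_upper_bounds Y K Phi c k0 cN cN_pos K_normal H1 c_ge0 Halpha_lim).
exact (weakly_null_convex_meets_balls Y _ Phi
         (eventual_upper_bound_convex Y K Phi c k0 HKconv) Phi_bounds H3).
Qed.
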